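(* Let $g:\mathbb{C}\to\mathbb{C}$ be holomorphic at $0$ with $g(0)=0$ and $g'(0)\neq 0$, let $\varphi:\mathbb{N}\to\mathbb{C}\setminus\{0\}$, and let $a\neq 0$ be a real number. Let $(P_n(x))_{n\ge 0}$ be a sequence of Appell polynomials of type $(g,\varphi)$ with generating function $f$, i.e. $f$ is holomorphic at $0$, $f(0)\neq 0$, and $$\sum_{n\ge 0}P_n(x)\frac{t^n}{\varphi(0)\varphi(1)\cdots\varphi(n)}=f(t)e^{x g(t)}$$ for all $x$ and all $t$ near $0$. Then $P_n(a-x)=(-1)^nP_n(x)$ for all $n\ge0$ and all $x$ if and only if both $g$ and the function $t\mapsto \left(e^{a g(t)}-1\right)f(t)$ are odd.
   Context: Here $\mathbb{N}=\{0,1,2,\dots\}$. A sequence of Appell polynomials of type $(g,\varphi)$ is a sequence of polynomials for which some $f$ holomorphic at $0$ with $f(0)\ne0$ satisfies the displayed identity. *)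

From Stdlib Require Import Reals List.
From Coquelicot Require Import Coquelicot.
Open Scope C_scope.

Definition Cexp (z : C) : C :=
  (exp (Re z) * cos (Im z), exp (Re z) * sin (Im z))%R.

(* Polynomials over C as coefficient lists (constant term first). *)
Definition Peval (p : list C) (x : C) : C :=
  fold_right (fun c acc => c + x * acc) 0 p.

Definition holo_at (f : C -> C) (z0 : C) : Prop :=
  exists r : R, (0 < r)%R /\
    forall z : C, (Cmod (z - z0) < r)%R -> ex_derive (K := C_AbsRing) (V := C_NormedModule) f z.

Definition odd_near0 (h : C -> C) : Prop :=
  exists r : R, (0 < r)%R /\ forall t : C, (Cmod t < r)%R -> h (- t) = - h t.

Fixpoint phiprod (phi : nat -> C) (n : nat) : C :=
  match n with
  | O => phi O
  | S m => phiprod phi m * phi (S m)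
  end.

Definition appell_gen (g : C -> C) (phi : nat -> C) (P : nat -> list C) (f : C -> C) : Prop :=
  holo_at f 0 /\ f 0 <> 0 /\
  forall x : C, exists r : R, (0 < r)%R /\
    forall t : C, (Cmod t < r)%R ->
      is_series (K := C_AbsRing) (V := C_NormedModule)
        (fun n => Peval (P n) x * t ^ n / phiprod phi n)
        (f t * Cexp (x * g t)).

From Stdlib Require Import Reals Lra Classical.
From Coquelicot Require Import Coquelicot.
Open Scope C_scope.

(* Comparing coefficients of the generating series, the symmetry of the P_n holds iff
   G(x, t) = f(t) e^{x g(t)} satisfies G(a - x, t) = G(x, -t) near t = 0 for every x.
   Taking x = 0 gives the reflection f(-t) = f(t) e^{a g(t)}; taking x = 1 then gives
   e^{g(t) + g(-t)} = 1, so g is odd because g is small near 0, and conversely oddness of g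
   and the reflection give back the functional equation.  For odd g the reflection is
   equivalent to the oddness of (e^{a g} - 1) f at every t with e^{a g(t)} <> 1, and since
   a <> 0 and g'(0) <> 0 this excludes only t = 0 near the origin. *)

Definition near0 (Q : C -> Prop) : Prop :=
  exists r : R, (0 < r)%R /\ forall t : C, (Cmod t < r)%R -> Q t.

Lemma near0_mp (Q Q' : C -> Prop) :
  near0 Q -> near0 (fun t => Q t -> Q' t) -> near0 Q'.
Proof.
  intros [r1 [Hr1 H1]] [r2 [Hr2 H2]].
  exists (Rmin r1 r2); split; [now apply Rmin_pos|].
  intros t Ht; pose proof (Rmin_l r1 r2); pose proof (Rmin_r r1 r2).
  apply H2; [|apply H1]; lra.
Qed.

Lemma near0_all (Q : C -> Prop) : (forall t, Q t) -> near0 Q.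
Proof. intros HQ; exists 1%R; split; auto; lra. Qed.

Lemma near0_and (Q Q' : C -> Prop) : near0 Q -> near0 Q' -> near0 (fun t => Q t /\ Q' t).
Proof.
  intros HQ HQ'; apply (near0_mp Q' _ HQ').
  apply (near0_mp Q _ HQ), near0_all; tauto.
Qed.

Lemma near0_iff (Q Q' : C -> Prop) :
  near0 (fun t => Q t <-> Q' t) -> near0 Q <-> near0 Q'.
Proof.
  intros HQQ'; split; intros H; apply (near0_mp _ _ H), (near0_mp _ _ HQQ'), near0_all; tauto.
Qed.

Lemma near0_and_iff (Q Q' : C -> Prop) :
  near0 (fun t => Q t /\ Q' t) <-> near0 Q /\ near0 Q'.
Proof.
  split; [|intros [HQ HQ']; now apply near0_and].
  intros H; split; apply (near0_mp _ _ H), near0_all; tauto.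
Qed.

Lemma near0_opp (Q : C -> Prop) : near0 Q -> near0 (fun t => Q (- t)).
Proof. intros [r [Hr HQ]]; exists r; split; auto; intros t Ht; apply HQ; now rewrite Cmod_opp. Qed.

Notation is_Cseries := (is_series (K := C_AbsRing) (V := C_NormedModule)).

Lemma is_Cseries_unique (u : nat -> C) (l l' : C) : is_Cseries u l -> is_Cseries u l' -> l = l'.
Proof. apply filterlim_locally_unique. Qed.

Lemma sum_n_Re_Im (u : nat -> C) (n : nat) :
  sum_n (fun k => Re (u k)) n = Re (sum_n (G := C_AbelianMonoid) u n) /\
  sum_n (fun k => Im (u k)) n = Im (sum_n (G := C_AbelianMonoid) u n).
Proof.
  induction n as [|n [IHre IHim]]; [rewrite !sum_O; auto|].
  rewrite !sum_Sn, IHre, IHim; auto.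
Qed.

Lemma is_Cseries_ext (u v : nat -> C) (l : C) :
  (forall n, u n = v n) -> is_Cseries u l -> is_Cseries v l.
Proof. apply is_series_ext. Qed.

Lemma is_Cseries_Re_Im (u : nat -> C) (l : C) : is_Cseries u l ->
  is_series (fun n => Re (u n)) (Re l) /\ is_series (fun n => Im (u n)) (Im l).
Proof.
  intros Hu; split; unfold is_series;
    (eapply filterlim_ext; [intros n; symmetry; apply sum_n_Re_Im|]);
    intros Q [eps HQ]; [apply (Hu (fun z => Q (Re z))) | apply (Hu (fun z => Q (Im z)))];
    exists eps; intros z [Hre Him]; apply HQ; auto.
Qed.

Lemma pseries_eq0_coef (a : nat -> R) (r : R) : (0 < r)%R ->
  (forall s : R, (Rabs s < r)%R -> is_series (fun n => a n * s ^ n)%R 0%R) ->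
  forall n, a n = 0%R.
Proof.
  intros Hr Ha n.
  assert (Hrad : Rbar_lt 0 (CV_radius a)).
  { destruct (Rbar_lt_le_dec 0 (CV_radius a)) as [Hlt|Hle]; auto; exfalso.
    apply (CV_disk_outside a (r / 2)).
    - eapply Rbar_le_lt_trans; [exact Hle|]; simpl; rewrite Rabs_pos_eq; lra.
    - apply ex_series_lim_0; exists 0%R; apply Ha; rewrite Rabs_pos_eq; lra. }
  assert (Hrad0 : Rbar_lt 0 (CV_radius (fun _ => 0%R))) by (rewrite CV_radius_const_0; exact I).
  apply (PSeries_ext_recip a (fun _ => 0%R) n Hrad Hrad0).
  exists (mkposreal r Hr); intros s Hs.
  rewrite PSeries_const_0; apply is_series_unique, Ha.
  change (Rabs (s - 0) < r)%R in Hs; now rewrite Rminus_0_r in Hs.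
Qed.

Lemma Cpseries_eq0_coef (d : nat -> C) :
  near0 (fun t => is_Cseries (fun n => d n * t ^ n) (RtoC 0)) -> forall n, d n = 0.
Proof.
  intros [r [Hr Hd]] n.
  assert (Hreal : forall s : R, (Rabs s < r)%R ->
    is_series (fun k => Re (d k) * s ^ k)%R 0%R /\ is_series (fun k => Im (d k) * s ^ k)%R 0%R).
  { intros s Hs.
    assert (Hds : is_Cseries (fun k => d k * RtoC s ^ k) (RtoC 0)) by (apply Hd; now rewrite Cmod_R).
    destruct (is_Cseries_Re_Im _ _ Hds) as [Hre Him].
    split; [eapply is_series_ext; [|exact Hre] | eapply is_series_ext; [|exact Him]];
      intros k; cbv beta; rewrite <- RtoC_pow; destruct (d k); simpl; ring. }
  assert (Hre : Re (d n) = 0%R)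
    by (apply (pseries_eq0_coef (fun k => Re (d k)) r Hr); apply Hreal).
  assert (Him : Im (d n) = 0%R)
    by (apply (pseries_eq0_coef (fun k => Im (d k)) r Hr); apply Hreal).
  destruct (d n) as [x y]; simpl in *; now subst.
Qed.

Lemma Cpow_opp (t : C) (n : nat) : (- t) ^ n = (- 1) ^ n * t ^ n.
Proof.
  rewrite <- Cpow_mult_l; f_equal.
  apply injective_projections; simpl; ring.
Qed.

Lemma phiprod_neq0 (phi : nat -> C) :
  (forall n, phi n <> 0) -> forall n, phiprod phi n <> 0.
Proof.
  intros Hphi n; induction n as [|n IHn]; simpl; auto.
  apply Cmult_neq_0; auto.
Qed.

Section CoefficientSymmetry.

Variables (c : nat -> C -> C) (w : nat -> C) (F : C -> C -> C) (sigma : C -> C).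
Hypothesis w_neq0 : forall n, w n <> 0.
Hypothesis F_series :
  forall x, near0 (fun t => is_Cseries (fun n => c n x * t ^ n / w n) (F x t)).

Lemma coef_symmetry_iff :
  (forall n x, c n (sigma x) = (- 1) ^ n * c n x) <->
  (forall x, near0 (fun t => F (sigma x) t = F x (- t))).
Proof.
  split.
  - intros Hsym x.
    apply (near0_mp _ _ (F_series (sigma x))), (near0_mp _ _ (near0_opp _ (F_series x))).
    apply near0_all; intros t Hx Hsx; apply (is_Cseries_unique _ _ _ Hsx).
    eapply is_Cseries_ext; [|exact Hx]; intros n.
    rewrite Hsym, Cpow_opp; unfold Cdiv; ring.
  - intros HF n x.
    set (d := fun k => (c k (sigma x) - (- 1) ^ k * c k x) / w k).
    assert (Hd : d n = 0).
    { apply Cpseries_eq0_coef.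
      apply (near0_mp _ _ (HF x)), (near0_mp _ _ (F_series (sigma x))),
        (near0_mp _ _ (near0_opp _ (F_series x))).
      apply near0_all; intros t Hx Hsx Ht.
      assert (H0 : plus (F (sigma x) t) (opp (F x (- t))) = RtoC 0)
        by (rewrite Ht; change (F x (- t) - F x (- t) = RtoC 0); ring).
      rewrite <- H0.
      eapply is_Cseries_ext; [|exact (is_series_minus _ _ _ _ Hsx Hx)]; intros k.
      change (c k (sigma x) * t ^ k / w k - c k x * (- t) ^ k / w k = d k * t ^ k).
      unfold d; rewrite Cpow_opp; unfold Cdiv; ring. }
    unfold d in Hd.
    replace (c n (sigma x))
      with ((c n (sigma x) - (- 1) ^ n * c n x) / w n * w n + (- 1) ^ n * c n x)
      by (field; apply w_neq0).
    rewrite Hd; ring.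
Qed.

End CoefficientSymmetry.

Lemma Cmult_eq0_r (z w : C) : z * w = 0 -> z <> 0 -> w = 0.
Proof. intros Hzw Hz; apply NNPP; intros Hw; now apply (Cmult_neq_0 z w). Qed.

Lemma Cmult_cancel_l (z w w' : C) : z <> 0 -> z * w = z * w' -> w = w'.
Proof.
  intros Hz E; replace w with (w - w' + w') by ring.
  rewrite (Cmult_eq0_r z (w - w')); [ring| |exact Hz].
  replace (z * (w - w')) with (z * w - z * w') by ring; rewrite E; ring.
Qed.

Lemma Cexp_add (u v : C) : Cexp (u + v) = Cexp u * Cexp v.
Proof.
  destruct u as [x y], v as [x' y']; unfold Cexp; simpl.
  rewrite exp_plus, cos_plus, sin_plus.
  apply injective_projections; simpl; ring.
Qed.

Lemma Cexp_0 : Cexp 0 = 1.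
Proof.
  unfold Cexp; simpl; rewrite exp_0, cos_0, sin_0.
  apply injective_projections; simpl; ring.
Qed.

Lemma Cexp_opp_r (u : C) : Cexp u * Cexp (- u) = 1.
Proof. rewrite <- Cexp_add, <- Cexp_0; f_equal; ring. Qed.

Lemma Cexp_eq1_small (z : C) : (Cmod z < 1)%R -> Cexp z = 1 -> z = 0.
Proof.
  destruct z as [x y]; intros Hz E.
  assert (Hy : (Rabs y < 1)%R).
  { pose proof (Rmax_Cmod (x, y)); pose proof (Rmax_r (Rabs x) (Rabs y)); simpl in *; lra. }
  unfold Cexp in E; simpl in E; injection E as Ecos Esin.
  pose proof (exp_pos x).
  assert (Hsin : sin y = 0%R) by (destruct (Rmult_integral _ _ Esin); auto; lra).
  assert (y = 0%R).
  { pose proof PI2_3_2; apply Rabs_def2 in Hy.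
    destruct (Rtotal_order y 0) as [Hneg|[Hzero|Hpos]]; auto; exfalso.
    - pose proof (sin_gt_0 (- y)); rewrite sin_neg in *; lra.
    - pose proof (sin_gt_0 y); lra. }
  subst y; rewrite cos_0, Rmult_1_r, <- exp_0 in Ecos.
  apply exp_inv in Ecos; now subst.
Qed.

Lemma Cexp_twist_odd_iff (u p q : C) : Cexp u <> 1 ->
  q = p * Cexp u <-> (Cexp (- u) - 1) * q = - ((Cexp u - 1) * p).
Proof.
  intros Hu; pose proof (Cexp_opp_r u) as Einv; split.
  - intros ->.
    transitivity (p * (Cexp u * Cexp (- u)) - p * Cexp u); [ring|].
    rewrite Einv; ring.
  - intros Hodd.
    assert (Hfac : (Cexp u - 1) * (q - p * Cexp u) = 0).
    { transitivity (- Cexp u * ((Cexp (- u) - 1) * q + (Cexp u - 1) * p)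
                    + (Cexp u * Cexp (- u) - 1) * q); [ring|].
      rewrite Hodd, Einv; ring. }
    apply Cmult_eq0_r in Hfac.
    + replace q with (q - p * Cexp u + p * Cexp u) by ring; rewrite Hfac; ring.
    + intros E; apply Hu; replace (Cexp u) with (Cexp u - 1 + 1) by ring; rewrite E; ring.
Qed.

Lemma ex_derive_continuous_near0 (h : C -> C) : ex_derive (K := C_AbsRing) (V := C_NormedModule) h (RtoC 0) ->
  forall eps : R, (0 < eps)%R -> near0 (fun t => (Cmod (h t - h 0) < eps)%R).
Proof.
  intros Hh eps Heps.
  destruct (ex_derive_continuous h (RtoC 0) Hh (ball_norm (h 0) (mkposreal eps Heps)))
    as [d Hd].
  - apply (locally_le_locally_norm (K := C_AbsRing) (V := C_NormedModule)).
    apply locally_norm_ball_norm.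
  - exists d; split; [apply cond_pos|]; intros t Ht; apply Hd.
    change (Cmod (t - 0) < d)%R; now replace (t - 0) with t by ring.
Qed.

Lemma ex_derive_vanish_small (h : C -> C) :
  ex_derive (K := C_AbsRing) (V := C_NormedModule) h (RtoC 0) -> h 0 = 0 ->
  forall eps : R, (0 < eps)%R -> near0 (fun t => (Cmod (h t) < eps)%R).
Proof.
  intros Hh H0 eps Heps; apply (near0_mp _ _ (ex_derive_continuous_near0 h Hh eps Heps)), near0_all.
  intros t; now rewrite H0; replace (h t - 0) with (h t) by ring.
Qed.

Lemma near0_Cmult_small (c : C) (h : C -> C) :
  (forall eps : R, (0 < eps)%R -> near0 (fun t => (Cmod (h t) < eps)%R)) ->
  near0 (fun t => (Cmod (c * h t) < 1)%R).
Proof.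
  intros Hh; pose proof (Cmod_ge_0 c).
  apply (near0_mp _ _ (Hh (/ (Cmod c + 1))%R ltac:(apply Rinv_0_lt_compat; lra))), near0_all.
  intros t Ht; rewrite Cmod_mult.
  apply (Rmult_lt_compat_l (Cmod c + 1)) in Ht; [|lra].
  rewrite Rinv_r in Ht; [|lra].
  pose proof (Cmod_ge_0 (h t)); nra.
Qed.

Lemma near0_neq0 (h : C -> C) : ex_derive (K := C_AbsRing) (V := C_NormedModule) h (RtoC 0) ->
  h 0 <> 0 -> near0 (fun t => h t <> 0).
Proof.
  intros Hh H0.
  apply (near0_mp _ _ (ex_derive_continuous_near0 h Hh (Cmod (h 0)) (proj1 (Cmod_gt_0 _) H0))), near0_all.
  intros t Ht E; rewrite E in Ht; replace (0 - h 0) with (- h 0) in Ht by ring.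
  rewrite Cmod_opp in Ht; lra.
Qed.

Lemma is_derive_isolated_value (g : C -> C) (l : C) :
  is_derive (K := C_AbsRing) (V := C_NormedModule) g (RtoC 0) l -> l <> 0 ->
  near0 (fun t => g t = g 0 -> t = 0).
Proof.
  intros [_ Hd] Hl.
  pose proof (proj1 (Cmod_gt_0 _) Hl) as Hlpos.
  destruct (Hd (RtoC 0) (fun Q HQ => HQ) (mkposreal (Cmod l / 2) ltac:(simpl; lra))) as [d Hd'].
  exists d; split; [apply cond_pos|]; intros t Ht E.
  assert (Hb : ball (M := AbsRing_UniformSpace C_AbsRing) (RtoC 0) d t)
    by (change (Cmod (t - 0) < d)%R; now replace (t - 0) with t by ring).
  specialize (Hd' t Hb); simpl in Hd'.
  change (Cmod (g t - g 0 - (t - 0) * l) <= Cmod l / 2 * Cmod (t - 0))%R in Hd'.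
  rewrite E in Hd'; replace (t - 0) with t in Hd' by ring.
  replace (g 0 - g 0 - t * l) with (- (t * l)) in Hd' by ring.
  rewrite Cmod_opp, Cmod_mult in Hd'.
  apply Cmod_eq_0; pose proof (Cmod_ge_0 t); nra.
Qed.

Section Reflection.

Variables (f g : C -> C) (a : C).

Lemma generating_reflection_iff :
  near0 (fun t => f t <> 0) -> near0 (fun t => (Cmod (g t) < / 2)%R) ->
  (forall x, near0 (fun t => f t * Cexp ((a - x) * g t) = f (- t) * Cexp (x * g (- t)))) <->
  near0 (fun t => g (- t) = - g t /\ f (- t) = f t * Cexp (a * g t)).
Proof.
  intros Hf Hg; split.
  - intros HF.
    apply (near0_mp _ _ (HF 0)), (near0_mp _ _ (HF 1)), (near0_mp _ _ Hf),
      (near0_mp _ _ Hg), (near0_mp _ _ (near0_opp _ Hg)), near0_all.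
    intros t Hgopp Hgt Hft E1 E0.
    assert (Hrefl : f (- t) = f t * Cexp (a * g t)).
    { replace (a - 0) with a in E0 by ring; replace (0 * g (- t)) with (RtoC 0) in E0 by ring.
      rewrite E0, Cexp_0; ring. }
    split; [|exact Hrefl].
    rewrite Hrefl, <- Cmult_assoc in E1; apply Cmult_cancel_l in E1; [|exact Hft].
    (* [e^{g(t) + g(-t)} = 1] with [g(t) + g(-t)] small forces [g(-t) = - g(t)]. *)
    assert (Hsum : Cexp (g t + g (- t)) = 1).
    { replace (g t + g (- t)) with ((a * g t + 1 * g (- t)) + - ((a - 1) * g t)) by ring.
      rewrite !Cexp_add, <- E1; apply Cexp_opp_r. }
    apply Cexp_eq1_small in Hsum.
    + replace (g (- t)) with (g t + g (- t) - g t) by ring; rewrite Hsum; ring.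
    + pose proof (Cmod_triangle (g t) (g (- t))); lra.
  - intros Hrefl x; apply (near0_mp _ _ Hrefl), near0_all; intros t [Hodd Href].
    rewrite Hodd, Href, <- Cmult_assoc, <- Cexp_add; do 2 f_equal; ring.
Qed.

Hypothesis a_neq0 : a <> 0.
Hypothesis g0 : g 0 = 0.
Hypothesis g_isolated : near0 (fun t => g t = g 0 -> t = 0).
Hypothesis ag_small : near0 (fun t => (Cmod (a * g t) < 1)%R).

Lemma reflection_iff_odd :
  near0 (fun t => g (- t) = - g t) ->
  near0 (fun t => f (- t) = f t * Cexp (a * g t)) <->
  odd_near0 (fun t => (Cexp (a * g t) - 1) * f t).
Proof.
  intros Hodd; apply near0_iff.
  apply (near0_mp _ _ Hodd), (near0_mp _ _ g_isolated), (near0_mp _ _ ag_small), near0_all.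
  intros t Hsmall Hiso Hgt; rewrite Hgt; replace (a * - g t) with (- (a * g t)) by ring.
  destruct (classic (Cexp (a * g t) = 1)) as [E|E].
  - (* a zero of [e^{a g} - 1] near 0 is [t = 0] itself *)
    apply Cexp_eq1_small, Cmult_eq0_r in E; [|exact a_neq0|exact Hsmall].
    rewrite g0 in Hiso; specialize (Hiso E); subst t.
    replace (- RtoC 0) with (RtoC 0) by ring.
    rewrite g0, Cmult_0_r; replace (- RtoC 0) with (RtoC 0) by ring; rewrite Cexp_0.
    split; intros; ring.
  - now apply Cexp_twist_odd_iff.
Qed.

End Reflection.

Theorem mainTheorem3 (g : C -> C) (phi : nat -> C) (a : R) (P : nat -> list C) (f : C -> C) :
  holo_at g 0 -> g 0 = 0 ->
  (exists l : C, is_derive (K := C_AbsRing) (V := C_NormedModule) g (RtoC 0) l /\ l <> 0) ->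
  (forall n : nat, phi n <> 0) ->
  a <> 0%R ->
  appell_gen g phi P f ->
  ((forall (n : nat) (x : C), Peval (P n) (RtoC a - x) = (- 1) ^ n * Peval (P n) x)
   <-> (odd_near0 g /\ odd_near0 (fun t => (Cexp (RtoC a * g t) - 1) * f t))).
Proof.
  intros _ Hg0 [l [Hgl Hl0]] Hphi Ha [[rf [Hrf Hfd]] [Hf0 Hseries]].
  assert (Hgd : ex_derive (K := C_AbsRing) (V := C_NormedModule) g (RtoC 0)) by now exists l.
  assert (Hfnz : near0 (fun t => f t <> 0)).
  { apply near0_neq0; [|exact Hf0].
    apply Hfd; replace (RtoC 0 - 0) with (RtoC 0) by ring; rewrite Cmod_0; exact Hrf. }
  assert (Ha0 : RtoC a <> 0) by (intros E; apply Ha; now injection E).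
  pose proof (ex_derive_vanish_small g Hgd Hg0) as Hgsmall.
  rewrite (coef_symmetry_iff (fun n x => Peval (P n) x) (phiprod phi)
             (fun x t => f t * Cexp (x * g t)) (fun x => RtoC a - x) (phiprod_neq0 phi Hphi) Hseries).
  rewrite (generating_reflection_iff f g (RtoC a) Hfnz (Hgsmall (/ 2)%R ltac:(lra))).
  rewrite near0_and_iff.
  assert (Hrefl := reflection_iff_odd f g (RtoC a) Ha0 Hg0 (is_derive_isolated_value g l Hgl Hl0)
                     (near0_Cmult_small (RtoC a) g Hgsmall)).
  split; intros [Hodd H]; split; auto; apply Hrefl; auto.
Qed.
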